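(* Let $\Omega\in\mathcal{M}_{n,1}$ with encoded table $(k;a_1,\dots,a_n;b,\beta)$. There is a unique $\overline{\Omega}\in\mathcal{M}_{n,1}$ such that, with $\rho(x,y)=(y-1-x,y)$: the set of junctions of $\overline{\Omega}$ is the image under $\rho$ of the set of junctions of $\Omega$, the start vertex of the $S$-step of $\overline{\Omega}$ is the image under $\rho$ of the start vertex of the $S$-step of $\Omega$, and the end vertex of the $N$-step of $\overline{\Omega}$ is the image under $\rho$ of the end vertex of the $N$-step of $\Omega$. The table $(k;\overline{a}_1,\dots,\overline{a}_n;\overline{b},\overline{\beta})$ encoded by $\overline{\Omega}$ (with the same $k$) is given by $\overline{a}_i=i-1-a_i$ for $i\ne k-1$, $\overline{a}_{k-1}=k-2-a_k-b$, $\overline{b}=a_k-1-a_{k-1}$, $\overline{\beta}=a_k+b-a_{k-1}-\beta-1$.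
   Context: Mixed configurations: let $\mathcal{G}_n=\{(x,y)\in\mathbb{Z}^2: 0\le x<y\le n\}$. Steps are $E=(1,0)$, $F=(1,0)$ (a distinct letter from $E$ with the same displacement), $S=(0,-1)$, $N=(1,1)$. A mixed path is a lattice path all of whose vertices lie in $\mathcal{G}_n$, given as a word $LR$ where the Left part $L$ is a word in $\{S,E\}$ and the Right part $R$ is a word in $\{F,N\}$; the vertex where $L$ ends and $R$ begins is the junction. An order-$n$ mixed configuration is a sequence $(\omega_1,\dots,\omega_n)$ of mixed paths such that for some permutation $\sigma$ of $\{1,\dots,n\}$, $\omega_i$ starts at $(0,i)$ and ends at $(\sigma(i)-1,\sigma(i))$, the Left parts are pairwise vertex-disjoint, and the Right parts are pairwise vertex-disjoint. $\mathcal{M}_{n,s}$ is the set of order-$n$ mixed configurations containing exactly $s$ $N$-steps in total (an element of $\mathcal{M}_{n,1}$ then has exactly one $S$-step as well). Every $\Omega=(\omega_1,\dots,\omega_n)\in\mathcal{M}_{n,1}$ can be written uniquely in the form $\omega_i=E^{a_i}F^{i-1-a_i}$ for $i\notin\{k-1,k\}$, $\omega_{k-1}=E^{a_{k-1}}F^{\beta}NF^{k-2-a_{k-1}-\beta}$, $\omega_k=E^{a_k}SE^{b}F^{k-2-a_k-b}$, for non-negative integers $k,a_1,\dots,a_n,b,\beta$ (exponents denote repetition of steps); the sequence $(k;a_1,\dots,a_n;b,\beta)$ is called the table encoded by $\Omega$. *)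

From HB Require Import structures.
From mathcomp Require Import all_boot all_order all_algebra all_fingroup.
Set Implicit Arguments. Unset Strict Implicit. Unset Printing Implicit Defensive.
Import Order.TTheory GRing.Theory Num.Theory.
Local Open Scope ring_scope.

Inductive step := E | F | S | N.

Definition is_SE (s : step) : bool := match s with E | S => true | _ => false end.
Definition is_FN (s : step) : bool := match s with F | N => true | _ => false end.
Definition is_S (s : step) : bool := if s is S then true else false.
Definition is_N (s : step) : bool := if s is N then true else false.

Definition point := (int * int)%type.

Definition dx (s : step) : int := match s with E | F | N => 1 | S => 0 end.
Definition dy (s : step) : int := match s with E | F => 0 | S => -1 | N => 1 end.

Definition move (p : point) (s : step) : point := (p.1 + dx s, p.2 + dy s).

Definition endpt (p : point) (w : seq step) : point := foldl move p w.
Definition verts (p : point) (w : seq step) : seq point := p :: scanl move p w.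

Fixpoint sstarts (p : point) (w : seq step) : seq point :=
  if w is s :: w' then (if is_S s then [:: p] else [::]) ++ sstarts (move p s) w'
  else [::].
Fixpoint nends (p : point) (w : seq step) : seq point :=
  if w is s :: w' then (if is_N s then [:: move p s] else [::]) ++ nends (move p s) w'
  else [::].

(* a word L R with L in {S,E}^* and R in {F,N}^*; the split is at the
   first F/N letter *)
Definition split_idx (w : seq step) : nat := find is_FN w.
Definition mixed_word (w : seq step) : bool := all is_FN (drop (split_idx w) w).
Definition junction (p : point) (w : seq step) : point := endpt p (take (split_idx w) w).
Definition left_verts (p : point) (w : seq step) : seq point :=
  verts p (take (split_idx w) w).
Definition right_verts (p : point) (w : seq step) : seq point :=
  verts (junction p w) (drop (split_idx w) w).

Definition in_grid (n : nat) (p : point) : bool := (0 <= p.1) && (p.1 < p.2) && (p.2 <= n%:Z).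

Definition path (Om : seq (seq step)) (i : nat) : seq step := nth [::] Om i.-1.
Definition start (i : nat) : point := (0, i%:Z).

Definition mixed_config (n : nat) (Om : seq (seq step)) : Prop :=
  [/\ size Om = n,
      (forall i : nat, (1 <= i <= n)%N ->
          mixed_word (path Om i) /\ all (in_grid n) (verts (start i) (path Om i))),
      (exists sigma : {perm 'I_n}, forall i : 'I_n,
          endpt (start i.+1) (path Om i.+1) = ((sigma i)%:Z, (sigma i).+1%:Z)),
      (forall i j : nat, (1 <= i <= n)%N -> (1 <= j <= n)%N -> i != j ->
          ~~ has (mem (left_verts (start j) (path Om j))) (left_verts (start i) (path Om i)))
    & (forall i j : nat, (1 <= i <= n)%N -> (1 <= j <= n)%N -> i != j ->
          ~~ has (mem (right_verts (start j) (path Om j))) (right_verts (start i) (path Om i)))].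

Definition M (n s : nat) (Om : seq (seq step)) : Prop :=
  mixed_config n Om /\ sumn (map (count is_N) Om) = s.

Definition junctions (Om : seq (seq step)) : seq point :=
  [seq junction (start i) (path Om i) | i <- iota 1 (size Om)].
Definition all_sstarts (Om : seq (seq step)) : seq point :=
  flatten [seq sstarts (start i) (path Om i) | i <- iota 1 (size Om)].
Definition all_nends (Om : seq (seq step)) : seq point :=
  flatten [seq nends (start i) (path Om i) | i <- iota 1 (size Om)].

Definition encodes (n : nat) (Om : seq (seq step)) (k : nat) (a : nat -> nat)
    (b beta : nat) : Prop :=
  [/\ (1 < k <= n)%N,
      (forall i : nat, (1 <= i <= n)%N -> i != k.-1 -> i != k ->
         (a i <= i.-1)%N /\ path Om i = nseq (a i) E ++ nseq (i.-1 - a i) F),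
      (a k.-1 + beta <= k.-2)%N /\
        path Om k.-1 = nseq (a k.-1) E ++ nseq beta F ++ N :: nseq (k.-2 - a k.-1 - beta) F
    & (a k + b <= k.-2)%N /\
        path Om k = nseq (a k) E ++ S :: nseq b E ++ nseq (k.-2 - a k - b) F].

Definition rho (p : point) : point := (p.2 - 1 - p.1, p.2).

Definition rho_related (Om Omb : seq (seq step)) : Prop :=
  [/\ junctions Omb =i map rho (junctions Om),
      all_sstarts Omb =i map rho (all_sstarts Om)
    & all_nends Omb =i map rho (all_nends Om)].

(* Counting end heights, the single N-step and the single S-step of an element of
   M_{n,1} lie in consecutive rows k-1 and k, and every other row is E^a F^(i-1-a);
   vertex-disjointness of the Left (resp. Right) parts of rows k-1 and k amounts to
   a_{k-1} < a_k (resp. a_{k-1} + beta < a_k + b).  So M_{n,1} is in bijection with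
   the tables satisfying these two inequalities.  The reflection rho maps each row
   segment {y = i, 0 <= x <= i-1} onto itself; on junctions it acts row by row
   except at height k-1, where it exchanges (and reverses the order of) the
   junctions of rows k-1 and k.  The reflected table again satisfies both
   inequalities, and conversely the S-start, the N-end and the junctions of a
   rho-related configuration pin down its table, which gives uniqueness. *)

From Pilot Require Import Defs.
From HB Require Import structures.
From mathcomp Require Import all_boot all_order all_algebra all_fingroup.
From mathcomp Require Import zify.
Set Implicit Arguments. Unset Strict Implicit. Unset Printing Implicit Defensive.
Import Order.TTheory GRing.Theory Num.Theory.
Local Open Scope ring_scope.

Definition step_eqb (s t : step) : bool :=
  match s, t with E, E | F, F | S, S | N, N => true | _, _ => false end.
Lemma step_eqP : Equality.axiom step_eqb.
Proof. by case; case; constructor. Qed.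
HB.instance Definition _ := hasDecEq.Build step step_eqP.

Lemma endpt_cons p s w : endpt p (s :: w) = endpt (move p s) w.
Proof. by []. Qed.

Lemma endpt_cat p u v : endpt p (u ++ v) = endpt (endpt p u) v.
Proof. by rewrite /endpt foldl_cat. Qed.

Lemma endpt_count w (x0 y0 : int) :
  endpt (x0, y0) w = (x0 + (count (predC is_S) w)%:Z,
                      y0 + (count is_N w)%:Z - (count is_S w)%:Z).
Proof.
elim: w x0 y0 => [|s w IH] x0 y0; first by rewrite /endpt /=; congr pair; lia.
by rewrite endpt_cons /move /= IH; case: s => /=; congr pair; lia.
Qed.

Lemma head_mem_verts p w : p \in verts p w.
Proof. by rewrite /verts inE eqxx. Qed.

Lemma mem_verts_nil q p : (q \in verts p [::]) = (q == p).
Proof. by rewrite /verts /= inE. Qed.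

Lemma mem_verts_cons q p s w :
  (q \in verts p (s :: w)) = (q == p) || (q \in verts (move p s) w).
Proof. by rewrite [in LHS]inE. Qed.

Lemma mem_verts_cat q p u v :
  (q \in verts p (u ++ v)) = (q \in verts p u) || (q \in verts (endpt p u) v).
Proof.
elim: u p => [|s u IH] p /=; last by rewrite !mem_verts_cons IH orbA.
by rewrite mem_verts_nil; case: eqP => // ->; rewrite head_mem_verts.
Qed.

Lemma sstarts_cat p u v : sstarts p (u ++ v) = sstarts p u ++ sstarts (endpt p u) v.
Proof. by elim: u p => [|s u IH] p //=; rewrite IH catA. Qed.

Lemma nends_cat p u v : nends p (u ++ v) = nends p u ++ nends (endpt p u) v.
Proof. by elim: u p => [|s u IH] p //=; rewrite IH catA. Qed.

Definition horiz (s : step) : bool := (s == E) || (s == F).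

Lemma horiz_move s (x y : int) : horiz s -> move (x, y) s = (x + 1, y).
Proof. by case: s => // _; rewrite /move /= addr0. Qed.

Section HorizontalRun.

Variables (s : step) (m : nat).
Hypothesis hs : horiz s.

Lemma mem_verts_nseq (x y x0 y0 : int) :
  ((x, y) \in verts (x0, y0) (nseq m s)) = (y == y0) && (x0 <= x <= x0 + m%:Z).
Proof.
elim: m x0 => [|m' IH] x0 /=; first by rewrite mem_verts_nil xpair_eqE; lia.
by rewrite mem_verts_cons horiz_move // IH xpair_eqE; lia.
Qed.

Lemma endpt_nseq (x0 y0 : int) : endpt (x0, y0) (nseq m s) = (x0 + m%:Z, y0).
Proof.
elim: m x0 => [|m' IH] x0; first by rewrite /endpt /= addr0.
by rewrite endpt_cons horiz_move // IH; congr pair; lia.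
Qed.

Lemma sstarts_nseq p : sstarts p (nseq m s) = [::].
Proof. by elim: m p => [|m' IH] p //=; rewrite IH; case: s hs. Qed.

Lemma nends_nseq p : nends p (nseq m s) = [::].
Proof. by elim: m p => [|m' IH] p //=; rewrite IH; case: s hs. Qed.

End HorizontalRun.

Lemma all_SE_nseqE m : all is_SE (nseq m E).
Proof. by elim: m. Qed.

Lemma all_FN_nseqF m : all is_FN (nseq m F).
Proof. by elim: m. Qed.

Section MixedCat.

Variables (p : point) (L R : seq step).
Hypotheses (hL : all is_SE L) (hR : all is_FN R).

Lemma split_idx_cat : split_idx (L ++ R) = size L.
Proof.
rewrite /split_idx find_cat; have /negbTE -> : ~~ has is_FN L.
  by apply/hasPn => s /(allP hL); case: s.
by case: R hR => [|[] ?] //= _; rewrite addn0.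
Qed.

Lemma left_verts_cat : left_verts p (L ++ R) = verts p L.
Proof. by rewrite /left_verts split_idx_cat take_size_cat. Qed.

Lemma junction_cat : junction p (L ++ R) = endpt p L.
Proof. by rewrite /junction split_idx_cat take_size_cat. Qed.

Lemma right_verts_cat : right_verts p (L ++ R) = verts (endpt p L) R.
Proof. by rewrite /right_verts junction_cat split_idx_cat drop_size_cat. Qed.

Lemma mixed_word_cat : mixed_word (L ++ R).
Proof. by rewrite /mixed_word split_idx_cat drop_size_cat. Qed.

End MixedCat.

Lemma mixed_wordP w : mixed_word w ->
  exists L R, [/\ w = L ++ R, all is_SE L & all is_FN R].
Proof.
rewrite /mixed_word /split_idx => hR.
exists (take (find is_FN w) w), (drop (find is_FN w) w); split=> //.
  by rewrite cat_take_drop.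
by elim: w {hR} => [|[] w IH] //=.
Qed.

Lemma mem_verts_mixed q p w : mixed_word w ->
  (q \in verts p w) = (q \in left_verts p w) || (q \in right_verts p w).
Proof.
move=> /mixed_wordP [L [R [-> hL hR]]].
by rewrite left_verts_cat // right_verts_cat // mem_verts_cat.
Qed.

Lemma count_S_FN R : all is_FN R -> count is_S R = 0%N.
Proof. by elim: R => [|[] R IH] //= /IH ->. Qed.

Lemma count_N_SE L : all is_SE L -> count is_N L = 0%N.
Proof. by elim: L => [|[] L IH] //= /IH ->. Qed.

Lemma SE_count_S0 L : all is_SE L -> count is_S L = 0%N -> L = nseq (size L) E.
Proof. by elim: L => [|[] L IH] //= h1 h2; rewrite -IH. Qed.

Lemma SE_count_S1 L : all is_SE L -> count is_S L = 1%N ->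
  exists a b, L = nseq a E ++ S :: nseq b E.
Proof.
elim: L => [|[] L IH] //= hL hS; last first.
  by exists 0%N, (size L); rewrite -SE_count_S0 //; case: hS.
by have [a [b ->]] := IH hL hS; exists a.+1, b.
Qed.

Lemma FN_count_N0 R : all is_FN R -> count is_N R = 0%N -> R = nseq (size R) F.
Proof. by elim: R => [|[] R IH] //= h1 h2; rewrite -IH. Qed.

Lemma FN_count_N1 R : all is_FN R -> count is_N R = 1%N ->
  exists a b, R = nseq a F ++ N :: nseq b F.
Proof.
elim: R => [|[] R IH] //= hR hN; last first.
  by exists 0%N, (size R); rewrite -FN_count_N0 //; case: hN.
by have [a [b ->]] := IH hR hN; exists a.+1, b.
Qed.

Definition flat_row a c : seq step := nseq a E ++ nseq c F.
Definition N_row a be d : seq step := nseq a E ++ nseq be F ++ N :: nseq d F.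
Definition S_row a b c : seq step := nseq a E ++ S :: nseq b E ++ nseq c F.

Lemma flat_row_spec a c (y0 : int) : let w := flat_row a c in let p := ((0 : int), y0) in
  [/\ forall x y : int, ((x, y) \in left_verts p w) = (y == y0) && (0 <= x <= a%:Z),
      forall x y : int, ((x, y) \in right_verts p w) = (y == y0) && (a%:Z <= x <= (a + c)%:Z),
      junction p w = (a%:Z, y0), endpt p w = ((a + c)%:Z, y0) &
      [/\ mixed_word w, sstarts p w = [::], nends p w = [::] & count is_N w = 0%N]].
Proof.
have hL := all_SE_nseqE a; have hR := all_FN_nseqF c.
rewrite /flat_row left_verts_cat // right_verts_cat // junction_cat //.
rewrite !endpt_nseq // add0r; split.
- by move=> x y; rewrite mem_verts_nseq //; lia.
- by move=> x y; rewrite mem_verts_nseq //; lia.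
- by [].
- by rewrite endpt_cat !endpt_nseq // add0r; congr pair; lia.
split; first exact: mixed_word_cat.
- by rewrite sstarts_cat !sstarts_nseq.
- by rewrite nends_cat !nends_nseq.
by rewrite count_cat !count_nseq.
Qed.

Lemma N_row_spec a be d (y0 : int) : let w := N_row a be d in let p := ((0 : int), y0) in
  [/\ forall x y : int, ((x, y) \in left_verts p w) = (y == y0) && (0 <= x <= a%:Z),
      forall x y : int, ((x, y) \in right_verts p w) =
         ((y == y0) && (a%:Z <= x <= (a + be)%:Z)) ||
         ((y == y0 + 1) && ((a + be).+1%:Z <= x <= (a + be + d).+1%:Z)),
      junction p w = (a%:Z, y0), endpt p w = ((a + be + d).+1%:Z, y0 + 1) &
      [/\ mixed_word w, sstarts p w = [::], nends p w = [:: ((a + be).+1%:Z, y0 + 1)]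
        & count is_N w = 1%N]].
Proof.
have hL := all_SE_nseqE a.
have hR : all is_FN (nseq be F ++ N :: nseq d F) by rewrite all_cat all_FN_nseqF /= all_FN_nseqF.
rewrite /N_row left_verts_cat // right_verts_cat // junction_cat // endpt_nseq // add0r.
split.
- by move=> x y; rewrite mem_verts_nseq //; lia.
- move=> x y; rewrite mem_verts_cat mem_verts_nseq // endpt_nseq // mem_verts_cons.
  by rewrite /move /= mem_verts_nseq // xpair_eqE; lia.
- by [].
- rewrite !endpt_cat !endpt_nseq // endpt_cons /move /= endpt_nseq // add0r.
  by congr pair; lia.
split; first exact: mixed_word_cat.
- by rewrite !sstarts_cat !sstarts_nseq //= sstarts_nseq.
- rewrite !nends_cat !nends_nseq //= nends_nseq // !endpt_nseq // /move /= add0r.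
  by congr (cons (_, _) _); lia.
by rewrite !count_cat !count_nseq /= count_nseq.
Qed.

Lemma S_row_spec a b c (y0 : int) : let w := S_row a b c in let p := ((0 : int), y0) in
  [/\ forall x y : int, ((x, y) \in left_verts p w) =
         ((y == y0) && (0 <= x <= a%:Z)) || ((y == y0 - 1) && (a%:Z <= x <= (a + b)%:Z)),
      forall x y : int, ((x, y) \in right_verts p w) =
         (y == y0 - 1) && ((a + b)%:Z <= x <= (a + b + c)%:Z),
      junction p w = ((a + b)%:Z, y0 - 1), endpt p w = ((a + b + c)%:Z, y0 - 1) &
      [/\ mixed_word w, sstarts p w = [:: (a%:Z, y0)], nends p w = [::]
        & count is_N w = 0%N]].
Proof.
move=> w p; subst w p.
have hL : all is_SE (nseq a E ++ S :: nseq b E) by rewrite all_cat all_SE_nseqE /= all_SE_nseqE.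
have hR := all_FN_nseqF c.
have eL : endpt (0, y0) (nseq a E ++ S :: nseq b E) = ((a + b)%:Z, y0 - 1).
  by rewrite endpt_cat endpt_nseq // endpt_cons /move /= endpt_nseq //; congr pair; lia.
have -> : S_row a b c = (nseq a E ++ S :: nseq b E) ++ nseq c F by rewrite -catA.
rewrite left_verts_cat // right_verts_cat // junction_cat // eL; split.
- move=> x y; rewrite mem_verts_cat mem_verts_nseq // endpt_nseq // mem_verts_cons.
  by rewrite /move /= mem_verts_nseq // xpair_eqE; lia.
- by move=> x y; rewrite mem_verts_nseq //; lia.
- by [].
- by rewrite endpt_cat eL endpt_nseq //; congr pair; lia.
split; first exact: mixed_word_cat.
- by rewrite !sstarts_cat !sstarts_nseq //= sstarts_nseq // endpt_nseq // add0r.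
- by rewrite !nends_cat !nends_nseq //= nends_nseq.
by rewrite !count_cat !count_nseq /= count_nseq.
Qed.

Lemma path_map_iota n (f : nat -> seq step) i : (1 <= i <= n)%N ->
  Defs.path [seq f j | j <- iota 1 n] i = f i.
Proof.
move=> /andP[hi1 hin]; rewrite /Defs.path (nth_map 0%N) ?size_iota; last by lia.
by rewrite nth_iota; [congr f; lia | lia].
Qed.

Lemma map_path_iota n Om : size Om = n -> [seq Defs.path Om i | i <- iota 1 n] = Om.
Proof.
move=> <-; apply: (eq_from_nth (x0 := [::])); first by rewrite size_map size_iota.
move=> j; rewrite size_map size_iota => hj.
by rewrite (nth_map 0%N) ?size_iota // nth_iota.
Qed.

Definition table_row k (a : nat -> nat) b be i : seq step :=
  if i == k.-1 then N_row (a i) be (k.-2 - a i - be)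
  else if i == k then S_row (a i) b (k.-2 - a i - b)
  else flat_row (a i) (i.-1 - a i).

Definition table_config n k a b be := [seq table_row k a b be i | i <- iota 1 n].

Definition table_bounds n k (a : nat -> nat) b be : Prop :=
  [/\ (1 < k <= n)%N,
      forall i, (1 <= i <= n)%N -> i != k.-1 -> i != k -> (a i <= i.-1)%N,
      (a k.-1 + be <= k.-2)%N & (a k + b <= k.-2)%N].

Lemma encodes_table_config n Om k a b be : size Om = n -> encodes n Om k a b be ->
  Om = table_config n k a b be /\ table_bounds n k a b be.
Proof.
move=> hs [hk hrow [hN eN] [hS eS]]; split; last first.
  by split=> // i hi hik1 hik; have [] := hrow i hi hik1 hik.
rewrite -(map_path_iota hs); apply/eq_in_map => i; rewrite mem_iota => hi.
rewrite /table_row; case: ifP => [/eqP ->|hik1]; first by rewrite eN.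
case: ifP => [/eqP ->|hik]; first by rewrite eS.
by have [] := hrow i ltac:(lia) (negbT hik1) (negbT hik).
Qed.

Lemma table_config_encodes n k a b be : table_bounds n k a b be ->
  encodes n (table_config n k a b be) k a b be.
Proof.
move=> [hk hai hN hS]; have hkk1 : (k == k.-1) = false by apply/negbTE; lia.
split=> //.
- move=> i hi hik1 hik; split; first exact: hai.
  by rewrite path_map_iota // /table_row (negbTE hik1) (negbTE hik).
- by split=> //; rewrite path_map_iota /table_row ?eqxx //; lia.
- by split=> //; rewrite path_map_iota /table_row ?hkk1 ?eqxx //; lia.
Qed.

Lemma table_config_ext n k a a' b be : (forall i, (1 <= i <= n)%N -> a i = a' i) ->
  table_config n k a b be = table_config n k a' b be.
Proof.
move=> eqa; apply/eq_in_map => i; rewrite mem_iota => hi.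
by rewrite /table_row !eqa //; lia.
Qed.

Lemma table_row_spec n k a b be i : table_bounds n k a b be -> (1 <= i <= n)%N ->
 let w := Defs.path (table_config n k a b be) i in let p := start i in
 [/\ forall x y : int, ((x, y) \in left_verts p w) =
       (if i == k then ((y == i%:Z) && (0 <= x <= (a i)%:Z)) ||
                       ((y == i%:Z - 1) && ((a i)%:Z <= x <= (a i + b)%:Z))
        else (y == i%:Z) && (0 <= x <= (a i)%:Z)),
     forall x y : int, ((x, y) \in right_verts p w) =
       (if i == k.-1 then ((y == i%:Z) && ((a i)%:Z <= x <= (a i + be)%:Z)) ||
                          ((y == i%:Z + 1) && ((a i + be).+1%:Z <= x <= k%:Z - 1))
        else if i == k then (y == i%:Z - 1) && ((a i + b)%:Z <= x <= k%:Z - 2)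
        else (y == i%:Z) && ((a i)%:Z <= x <= i%:Z - 1)),
     junction p w = (if i == k then ((a i + b)%:Z, i%:Z - 1) else ((a i)%:Z, i%:Z)),
     endpt p w = (if i == k.-1 then (k%:Z - 1, k%:Z)
                  else if i == k then (k%:Z - 2, k%:Z - 1) else (i%:Z - 1, i%:Z)) &
     [/\ mixed_word w, sstarts p w = (if i == k then [:: ((a i)%:Z, i%:Z)] else [::]),
         nends p w = (if i == k.-1 then [:: ((a i + be).+1%:Z, i%:Z + 1)] else [::])
       & count is_N w = (i == k.-1)]].
Proof.
move=> [hk hai hN hS] hi w p; subst w p; rewrite path_map_iota // /table_row /start.
case: ifP => [/eqP eik1|hik1].
  have -> : (i == k) = false by apply/negbTE; lia.
  have [l r j e [m s ns c]] := N_row_spec (a i) be (k.-2 - a i - be) i%:Z.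
  rewrite eik1 in l r j e m s ns c *; split=> //.
  - by move=> x y; rewrite r; lia.
  - by rewrite e; congr pair; lia.
case: ifP => [/eqP eik|hik].
  have [l r j e [m s ns c]] := S_row_spec (a i) b (k.-2 - a i - b) i%:Z.
  rewrite eik in l r j e m s ns c *; split=> //.
  - by move=> x y; rewrite r; lia.
  - by rewrite e; congr pair; lia.
have := hai i hi (negbT hik1) (negbT hik) => hai'.
have [l r j e [m s ns c]] := flat_row_spec (a i) (i.-1 - a i) i%:Z; split=> //.
- by move=> x y; rewrite r; lia.
- by rewrite e; congr pair; lia.
Qed.

Definition valid_table n k (a : nat -> nat) b be : Prop :=
  [/\ table_bounds n k a b be, (a k.-1 < a k)%N & (a k.-1 + be < a k + b)%N].

Section TableConfig.

Variables (n k : nat) (a : nat -> nat) (b be : nat).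
Hypothesis hb : table_bounds n k a b be.

Local Notation Om := (table_config n k a b be).

Lemma table_config_gaps : mixed_config n Om ->
  (a k.-1 < a k)%N /\ (a k.-1 + be < a k + b)%N.
Proof.
move=> [_ _ _ disjL disjR]; case: hb => hk _ _ hS.
have hk1 : (1 <= k.-1 <= n)%N by lia.
have hk0 : (1 <= k <= n)%N by lia.
have nk : k.-1 != k by lia.
have [l1 r1 _ _ _] := table_row_spec hb hk1.
have [l2 r2 _ _ _] := table_row_spec hb hk0.
have e1 : (k.-1 == k) = false by apply/negbTE.
have e2 : (k == k.-1) = false by apply/negbTE; lia.
have gapL : (a k.-1 < a k)%N.
  rewrite ltnNge; apply/negP => hle.
  move/hasPn: (disjL _ _ hk1 hk0 nk) => /(_ ((a k)%:Z, k%:Z - 1)).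
  rewrite l1 e1 /= => /(_ ltac:(lia)); apply/negP/negPn.
  by rewrite l2 eqxx /=; lia.
split=> //; rewrite ltnNge; apply/negP => hle.
move/hasPn: (disjR _ _ hk1 hk0 nk) => /(_ ((a k + b)%:Z, k%:Z - 1)).
rewrite r1 eqxx /= => /(_ ltac:(lia)); apply/negP/negPn.
by rewrite r2 eqxx e2 /=; lia.
Qed.

Hypotheses (gapL : (a k.-1 < a k)%N) (gapR : (a k.-1 + be < a k + b)%N).

Lemma table_config_rows i : (1 <= i <= n)%N ->
  mixed_word (Defs.path Om i) /\ all (in_grid n) (verts (start i) (Defs.path Om i)).
Proof.
move=> hi; have [l r _ _ [m _ _ _]] := table_row_spec hb hi.
split=> //; apply/allP => -[x y]; rewrite mem_verts_mixed // l r /in_grid /=.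
case: hb => hk hai hN hS; have := hai _ hi.
have f1 : i == k.-1 -> a i = a k.-1 by move/eqP->.
have f2 : i == k -> a i = a k by move/eqP->.
by case: (boolP (i == k.-1)) => e1; case: (boolP (i == k)) => e2 /=; lia.
Qed.

(* Rows k-1 and k end at each other's diagonal points: sigma is a transposition. *)
Lemma table_config_endpoints : exists sigma : {perm 'I_n}, forall i : 'I_n,
  endpt (start i.+1) (Defs.path Om i.+1) = ((sigma i)%:Z, (sigma i).+1%:Z).
Proof.
case: hb => hk _ _ _; have hk2 : (k.-2 < n)%N by lia.
have hk1 : (k.-1 < n)%N by lia.
exists (tperm (Ordinal hk2) (Ordinal hk1)) => j.
have hj : (1 <= j.+1 <= n)%N by have := ltn_ord j; lia.
have [_ _ _ -> _] := table_row_spec hb hj.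
case: tpermP => [->|->|nj2 nj1] /=.
- by rewrite (_ : k.-2.+1 == k.-1); [congr pair; lia | apply/eqP; lia].
- rewrite (_ : k.-1.+1 == k.-1 = false); last by apply/negbTE; lia.
  by rewrite (_ : k.-1.+1 == k); [congr pair; lia | apply/eqP; lia].
have nj2' : (j : nat) != k.-2 by apply/eqP => ej; apply: nj2; apply: val_inj.
have nj1' : (j : nat) != k.-1 by apply/eqP => ej; apply: nj1; apply: val_inj.
rewrite (_ : j.+1 == k.-1 = false); last by apply/negbTE; lia.
by rewrite (_ : j.+1 == k = false); [congr pair; lia | apply/negbTE; lia].
Qed.

Lemma table_config_left_disjoint i j : (1 <= i <= n)%N -> (1 <= j <= n)%N -> i != j ->
  ~~ has (mem (left_verts (start j) (Defs.path Om j))) (left_verts (start i) (Defs.path Om i)).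
Proof.
move=> hi hj nij; apply/hasPn => -[x y].
have [li _ _ _ _] := table_row_spec hb hi; have [lj _ _ _ _] := table_row_spec hb hj.
rewrite li inE lj.
case: hb => hk hai _ _; have := hai _ hi; have := hai _ hj.
have f1 : i == k.-1 -> a i = a k.-1 by move/eqP->.
have f2 : i == k -> a i = a k by move/eqP->.
have f3 : j == k.-1 -> a j = a k.-1 by move/eqP->.
have f4 : j == k -> a j = a k by move/eqP->.
by case: (boolP (i == k.-1)) => e1; case: (boolP (i == k)) => e2;
  case: (boolP (j == k.-1)) => e3; case: (boolP (j == k)) => e4 /=; lia.
Qed.

Lemma table_config_right_disjoint i j : (1 <= i <= n)%N -> (1 <= j <= n)%N -> i != j ->
  ~~ has (mem (right_verts (start j) (Defs.path Om j))) (right_verts (start i) (Defs.path Om i)).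
Proof.
move=> hi hj nij; apply/hasPn => -[x y].
have [_ ri _ _ _] := table_row_spec hb hi; have [_ rj _ _ _] := table_row_spec hb hj.
rewrite ri inE rj.
case: hb => hk hai _ _; have := hai _ hi; have := hai _ hj.
have f1 : i == k.-1 -> a i = a k.-1 by move/eqP->.
have f2 : i == k -> a i = a k by move/eqP->.
have f3 : j == k.-1 -> a j = a k.-1 by move/eqP->.
have f4 : j == k -> a j = a k by move/eqP->.
by case: (boolP (i == k.-1)) => e1; case: (boolP (i == k)) => e2;
  case: (boolP (j == k.-1)) => e3; case: (boolP (j == k)) => e4 /=; lia.
Qed.

Lemma table_config_count_N : sumn (map (count is_N) Om) = 1%N.
Proof.
case: hb => hk _ _ _.
rewrite -map_comp (eq_in_map _ (fun i => nat_of_bool (i == k.-1)) (iota 1 n)).1; last first.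
  move=> i; rewrite mem_iota => hi; have hi' : (1 <= i <= n)%N by lia.
  have [_ _ _ _ [_ _ _ <-]] := table_row_spec hb hi'.
  by rewrite /= path_map_iota.
by rewrite (sumn_count (pred1 k.-1)) count_uniq_mem ?iota_uniq // mem_iota; lia.
Qed.

Lemma table_config_M : M n 1 Om.
Proof.
split; last exact: table_config_count_N.
split; [by rewrite size_map size_iota | exact: table_config_rows
  | exact: table_config_endpoints | exact: table_config_left_disjoint
  | exact: table_config_right_disjoint].
Qed.

End TableConfig.

Definition leading_E (w : seq step) : nat := find (fun s => s != E) w.

Lemma leading_E_cat a w : leading_E (nseq a E ++ w) = (a + leading_E w)%N.
Proof. by elim: a => //= a ->. Qed.

Lemma leading_E_flat_row a c : leading_E (flat_row a c) = a.
Proof. by rewrite leading_E_cat; case: c => [|c]; rewrite addn0. Qed.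

Lemma leading_E_N_row a be d : leading_E (N_row a be d) = a.
Proof. by rewrite leading_E_cat; case: be => [|be]; rewrite addn0. Qed.

Lemma leading_E_S_row a b c : leading_E (S_row a b c) = a.
Proof. by rewrite leading_E_cat addn0. Qed.

Lemma SN_row_spec a b c d (y0 : int) :
  let w := nseq a E ++ S :: nseq b E ++ nseq c F ++ N :: nseq d F in
  let p := ((0 : int), y0) in
  [/\ ((a%:Z, y0 - 1) : point) \in left_verts p w,
      (((a + b)%:Z, y0 - 1) : point) \in right_verts p w &
      endpt p w = ((a + b + c + d).+1%:Z, y0)].
Proof.
move=> w p; subst w p.
have hL : all is_SE (nseq a E ++ S :: nseq b E) by rewrite all_cat all_SE_nseqE /= all_SE_nseqE.
have hR : all is_FN (nseq c F ++ N :: nseq d F) by rewrite all_cat all_FN_nseqF /= all_FN_nseqF.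
have eL : endpt (0, y0) (nseq a E ++ S :: nseq b E) = ((a + b)%:Z, y0 - 1).
  by rewrite endpt_cat endpt_nseq // endpt_cons /move /= endpt_nseq //; congr pair; lia.
have -> : nseq a E ++ S :: nseq b E ++ nseq c F ++ N :: nseq d F =
          (nseq a E ++ S :: nseq b E) ++ (nseq c F ++ N :: nseq d F) by rewrite -catA.
rewrite left_verts_cat // right_verts_cat // eL head_mem_verts; split=> //.
  by rewrite mem_verts_cat mem_verts_cons endpt_nseq // /move /= add0r addr0 head_mem_verts !orbT.
rewrite endpt_cat eL endpt_cat endpt_nseq // endpt_cons /move /= endpt_nseq //.
by congr pair; lia.
Qed.

Lemma sum_rows_eq1 n (f : nat -> nat) : (\sum_(j < n) f j.+1 = 1)%N ->
  exists2 r, (1 <= r <= n)%N & forall i, (1 <= i <= n)%N -> f i = (i == r).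
Proof.
move/eqP/sum_nat_eq1 => [r [_ fr f0]]; exists r.+1; first by have := ltn_ord r; lia.
move=> i hi; have hi' : (i.-1 < n)%N by lia.
have -> : i = (Ordinal hi').+1 by rewrite /=; lia.
rewrite eqSS val_eqE; case: eqVneq => [->|ne]; first by rewrite fr.
by rewrite f0.
Qed.

Lemma row_ordinal n i : (1 <= i <= n)%N -> exists j : 'I_n, i = j.+1.
Proof.
move=> hi; have hi' : (i.-1 < n)%N by lia.
by exists (Ordinal hi') => /=; lia.
Qed.

Section ConfigM1.

Variables (n : nat) (Om : seq (seq step)).
Hypothesis hM : M n 1 Om.

Local Notation row i := (Defs.path Om i).
Local Notation lead i := (leading_E (Defs.path Om i)).

Lemma rows_count_N : (\sum_(j < n) count is_N (row j.+1) = 1)%N.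
Proof.
case: hM => -[hs _ _ _ _] <-.
by rewrite sumnE big_map (big_nth [::]) hs big_mkord; apply: eq_bigr.
Qed.

(* The end heights of the rows are a permutation of 1..n, so S-steps and N-steps balance. *)
Lemma rows_count_S : (\sum_(j < n) count is_S (row j.+1) = 1)%N.
Proof.
case: hM => -[_ _ [sg hsg] _ _] _.
have : (\sum_(j < n) (j.+1 + count is_N (row j.+1)) =
        \sum_(j < n) ((sg j).+1 + count is_S (row j.+1)))%N.
  by apply: eq_bigr => j _; move: (hsg j); rewrite /start endpt_count => -[_]; lia.
rewrite !big_split /= rows_count_N.
have -> : (\sum_(j < n) (sg j).+1 = \sum_(j < n) j.+1)%N.
  by rewrite [RHS](reindex_inj (@perm_inj _ sg)).
by move/eqP; rewrite eqn_add2l => /eqP <-.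
Qed.

Lemma row_end_diag i : (1 <= i <= n)%N ->
  exists2 t, (t < n)%N & endpt (start i) (row i) = (t%:Z, t.+1%:Z).
Proof.
case: hM => -[_ _ [sg hsg] _ _] _ /row_ordinal [j ->].
by exists (sg j); rewrite ?hsg.
Qed.

Lemma row_end_inj i1 i2 : (1 <= i1 <= n)%N -> (1 <= i2 <= n)%N ->
  endpt (start i1) (row i1) = endpt (start i2) (row i2) -> i1 = i2.
Proof.
case: hM => -[_ _ [sg hsg] _ _] _ /row_ordinal [j1 ->] /row_ordinal [j2 ->].
rewrite !hsg => -[e _]; have : sg j1 = sg j2 by apply: val_inj; move: e => /=; lia.
by move/perm_inj ->.
Qed.

Variables (p q : nat).
Hypotheses (hNp : forall i, (1 <= i <= n)%N -> count is_N (row i) = (i == p))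
           (hSq : forall i, (1 <= i <= n)%N -> count is_S (row i) = (i == q)).

Lemma row_split i : (1 <= i <= n)%N -> exists L R, [/\ row i = L ++ R,
  all is_SE L, all is_FN R, count is_S L = (i == q) & count is_N R = (i == p)].
Proof.
case: hM => -[_ hmix _ _ _] _ hi.
have [L [R [e hL hR]]] := mixed_wordP (hmix i hi).1; exists L, R; split=> //.
- by rewrite -hSq // e count_cat (count_S_FN hR) addn0.
- by rewrite -hNp // e count_cat (count_N_SE hL).
Qed.

Lemma flat_rowE i : (1 <= i <= n)%N -> i != p -> i != q ->
  [/\ row i = flat_row (lead i) (i.-1 - lead i), (lead i <= i.-1)%N
    & endpt (start i) (row i) = (i.-1%:Z, i%:Z)].
Proof.
move=> hi /negbTE hip /negbTE hiq.
have [L [R [e hL hR]]] := row_split hi; rewrite hip hiq => hS hN.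
have ew : row i = flat_row (size L) (size R).
  by rewrite e /flat_row -SE_count_S0 // -FN_count_N0.
have [_ _ _ en _] := flat_row_spec (size L) (size R) i%:Z.
have [t ht] := row_end_diag hi; rewrite /start {1}ew en => -[e1 e2].
rewrite ew leading_E_flat_row /start en; split; [congr flat_row | | congr pair]; lia.
Qed.

Lemma N_row_neq_S_row : (1 <= p <= n)%N -> p != q.
Proof.
move=> hp; apply/eqP => epq.
have [L [R [e hL hR]]] := row_split hp; rewrite -epq eqxx => hS hN.
have [a [b eL]] := SE_count_S1 hL hS; have [c [d eR]] := FN_count_N1 hR hN.
have [lv rv en] := SN_row_spec a b c d p%:Z.
have [t ht] := row_end_diag hp; rewrite /start e eL eR -catA en => -[e1 e2].
have hp1 : (1 <= p.-1 <= n)%N by lia.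
have np1 : p.-1 != p by lia.
have nq1 : p.-1 != q by rewrite -epq.
have [ew hle _] := flat_rowE hp1 np1 nq1.
have [lv' rv' _ _ _] := flat_row_spec (lead p.-1) (p.-1.-1 - lead p.-1) p.-1%:Z.
case: hM => -[_ _ _ disjL disjR] _.
have np : p != p.-1 by lia.
case: (leqP a (lead p.-1)) => hlead.
  move/hasPn: (disjL p p.-1 hp hp1 np) => /(_ (a%:Z, p%:Z - 1)).
  rewrite /start e eL eR -catA => /(_ lv); apply/negP/negPn.
  by rewrite inE ew lv'; lia.
move/hasPn: (disjR p p.-1 hp hp1 np) => /(_ ((a + b)%:Z, p%:Z - 1)).
rewrite /start e eL eR -catA => /(_ rv); apply/negP/negPn.
by rewrite inE ew rv'; lia.
Qed.

Hypotheses (hp : (1 <= p <= n)%N) (hq : (1 <= q <= n)%N) (npq : p != q).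

Lemma N_rowE : exists2 be, (lead p + be <= p.-1)%N &
  row p = N_row (lead p) be (p.-1 - lead p - be).
Proof.
have [L [R [e hL hR]]] := row_split hp; rewrite eqxx (negbTE npq) => hS hN.
have [be [d eR]] := FN_count_N1 hR hN.
have ew : row p = N_row (size L) be d by rewrite e /N_row eR -SE_count_S0.
have [_ _ _ en _] := N_row_spec (size L) be d p%:Z.
have [t ht] := row_end_diag hp; rewrite /start {1}ew en => -[e1 e2].
by exists be; rewrite ew leading_E_N_row; [lia | congr N_row; lia].
Qed.

Lemma S_rowE : exists2 b, (lead q + b <= q.-2)%N &
  row q = S_row (lead q) b (q.-2 - lead q - b).
Proof.
have [L [R [e hL hR]]] := row_split hq; rewrite eqxx eq_sym (negbTE npq) => hS hN.
have [a [b eL]] := SE_count_S1 hL hS.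
have ew : row q = S_row a b (size R) by rewrite e /S_row eL -catA -FN_count_N0.
have [_ _ _ en _] := S_row_spec a b (size R) q%:Z.
have [t ht] := row_end_diag hq; rewrite /start {1}ew en => -[e1 e2].
by exists b; rewrite ew leading_E_S_row; [lia | congr S_row; lia].
Qed.

(* Otherwise the flat row p+1 would end where the N-row p ends. *)
Lemma S_row_succ_N_row : q = p.+1.
Proof.
have [be hbe ep] := N_rowE.
have [_ _ _ en _] := N_row_spec (lead p) be (p.-1 - lead p - be) p%:Z.
have [t ht] := row_end_diag hp; rewrite /start ep en => -[e1 e2].
apply/eqP; apply: contraT; rewrite eq_sym => nqp.
have hp1 : (1 <= p.+1 <= n)%N by lia.
have np1 : p.+1 != p by lia.
have [_ _ en1] := flat_rowE hp1 np1 nqp.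
suff : p.+1 = p by lia.
by apply: row_end_inj hp1 hp _; rewrite en1 /start ep en; congr pair; lia.
Qed.

End ConfigM1.

Lemma M1_table_config n Om : M n 1 Om ->
  exists k a b be, valid_table n k a b be /\ Om = table_config n k a b be.
Proof.
move=> hM; have [hconf _] := hM; have [hs _ _ _ _] := hconf.
have [p hp hNp] := @sum_rows_eq1 n (fun i => count is_N (Defs.path Om i)) (rows_count_N hM).
have [q hq hSq] := @sum_rows_eq1 n (fun i => count is_S (Defs.path Om i)) (rows_count_S hM).
have npq := N_row_neq_S_row hM hNp hSq hp.
have eqp := S_row_succ_N_row hM hNp hSq hp hq npq.
have [be hbe eN] := N_rowE hM hNp hSq hp hq npq.
have [b hb eS] := S_rowE hM hNp hSq hp hq npq.
pose a i := leading_E (Defs.path Om i).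
have eOm : Om = table_config n q a b be.
  rewrite -(map_path_iota hs); apply/eq_in_map => i; rewrite mem_iota => hi.
  rewrite /table_row; case: ifP => [/eqP ->|hip]; first by rewrite eqp /= eN.
  case: ifP => [/eqP ->|hiq]; first by rewrite eS.
  rewrite eqp /= in hip.
  by have [] := flat_rowE hM hNp hSq (i := i) ltac:(lia) (negbT hip) (negbT hiq).
have bounds : table_bounds n q a b be.
  split=> //; first by lia.
    move=> i hi hip hiq; rewrite eqp /= in hip.
    by have [] := flat_rowE hM hNp hSq hi hip hiq.
  by rewrite eqp.
have [gapL gapR] : (a q.-1 < a q)%N /\ (a q.-1 + be < a q + b)%N.
  by apply: table_config_gaps bounds _; rewrite -eOm.
by exists q, a, b, be.
Qed.

Definition table_junction k (a : nat -> nat) b i : point :=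
  if i == k then ((a i + b)%:Z, i%:Z - 1) else ((a i)%:Z, i%:Z).

Section TableMarkers.

Variables (n k : nat) (a : nat -> nat) (b be : nat).
Hypothesis hb : table_bounds n k a b be.

Local Notation Om := (table_config n k a b be).

Lemma mem_junctions_table z :
  (z \in junctions Om) <-> exists2 i, (1 <= i <= n)%N & z = table_junction k a b i.
Proof.
rewrite /junctions size_map size_iota; split.
  case/mapP => i; rewrite mem_iota => hi ->; have hi' : (1 <= i <= n)%N by lia.
  by exists i => //; have [_ _ -> _ _] := table_row_spec hb hi'.
move=> [i hi ->]; apply/mapP; exists i; first by rewrite mem_iota; lia.
by have [_ _ -> _ _] := table_row_spec hb hi.
Qed.

Lemma mem_sstarts_table z : (z \in all_sstarts Om) = (z == ((a k)%:Z, k%:Z)).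
Proof.
case: hb => hk _ _ _; rewrite /all_sstarts size_map size_iota.
apply/flatten_mapP/eqP => [[i]|->].
  rewrite mem_iota => hi; have hi' : (1 <= i <= n)%N by lia.
  have [_ _ _ _ [_ -> _ _]] := table_row_spec hb hi'.
  by case: ifP => [/eqP ->|]; rewrite ?inE // => /eqP.
have hk' : (1 <= k <= n)%N by lia.
exists k; first by rewrite mem_iota; lia.
by have [_ _ _ _ [_ -> _ _]] := table_row_spec hb hk'; rewrite eqxx inE.
Qed.

Lemma mem_nends_table z : (z \in all_nends Om) = (z == ((a k.-1 + be).+1%:Z, k%:Z)).
Proof.
case: hb => hk _ _ _; rewrite /all_nends size_map size_iota.
apply/flatten_mapP/eqP => [[i]|->].
  rewrite mem_iota => hi; have hi' : (1 <= i <= n)%N by lia.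
  have [_ _ _ _ [_ _ -> _]] := table_row_spec hb hi'.
  by case: ifP => [/eqP ->|]; rewrite ?inE // => /eqP ->; congr pair; lia.
have hk' : (1 <= k.-1 <= n)%N by lia.
exists k.-1; first by rewrite mem_iota; lia.
have [_ _ _ _ [_ _ -> _]] := table_row_spec hb hk'; rewrite eqxx inE.
by apply/eqP; congr pair; lia.
Qed.

End TableMarkers.

Definition bar_a k (a : nat -> nat) b i : nat :=
  if i == k.-1 then (k.-2 - a k - b)%N else (i.-1 - a i)%N.
Definition bar_b k (a : nat -> nat) : nat := (a k - 1 - a k.-1)%N.
Definition bar_beta k (a : nat -> nat) b be : nat := (a k + b - a k.-1 - be - 1)%N.

Definition swap_adj k i := if i == k.-1 then k else if i == k then k.-1 else i.

Lemma swap_adjK k : (0 < k)%N -> involutive (swap_adj k).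
Proof.
move=> hk i; rewrite /swap_adj.
case: (eqVneq i k.-1) => [->|ne1]; first by rewrite (_ : k == k.-1 = false) ?eqxx //; lia.
case: (eqVneq i k) => [->|ne2]; first by rewrite eqxx.
by rewrite (negbTE ne1) (negbTE ne2).
Qed.

Lemma swap_adj_range n k i : (1 < k <= n)%N -> (1 <= i <= n)%N -> (1 <= swap_adj k i <= n)%N.
Proof. by rewrite /swap_adj => hk hi; case: ifP => _; [lia | case: ifP => _; lia]. Qed.

Lemma mem_map_pred1 (T U : eqType) (f : T -> U) (s : seq T) x :
  (forall y, (y \in s) = (y == x)) -> forall z, (z \in map f s) = (z == f x).
Proof.
move=> hs z; apply/mapP/eqP => [[y] | ->]; first by rewrite hs => /eqP ->.
by exists x; rewrite ?hs.
Qed.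

Section BarTable.

Variables (n k : nat) (a : nat -> nat) (b be : nat).
Hypothesis hv : valid_table n k a b be.

Lemma valid_table_bar : valid_table n k (bar_a k a b) (bar_b k a) (bar_beta k a b be).
Proof.
case: hv => -[hk hai hN hS] gapL gapR.
have e1 : (k == k.-1) = false by apply/negbTE; lia.
rewrite /valid_table /table_bounds /bar_a /bar_b /bar_beta eqxx e1.
split; [split | lia | lia].
- lia.
- by move=> i hi /negbTE -> _; lia.
- lia.
- lia.
Qed.

Lemma table_junction_bar i : (1 <= i <= n)%N ->
  table_junction k (bar_a k a b) (bar_b k a) i = rho (table_junction k a b (swap_adj k i)).
Proof.
case: hv => -[hk hai hN hS] gapL gapR hi.
have e1 : (k == k.-1) = false by apply/negbTE; lia.
have e2 : (k.-1 == k) = false by apply/negbTE; lia.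
rewrite /table_junction /bar_a /bar_b /swap_adj /rho /=.
case: (eqVneq i k.-1) => [->|h1]; first by rewrite ?e1 ?e2 ?eqxx /=; congr pair; lia.
case: (eqVneq i k) => [->|h2]; first by rewrite ?e1 ?e2 ?eqxx /=; congr pair; lia.
by have := hai i hi h1 h2; rewrite (negbTE h2) /= => hle; congr pair; lia.
Qed.

Lemma rho_related_bar :
  rho_related (table_config n k a b be) (table_config n k (bar_a k a b) (bar_b k a) (bar_beta k a b be)).
Proof.
have [hb' _ _] := valid_table_bar; case: (hv) => hb gapL gapR; case: (hb) => hk _ hN hS.
split=> z.
- apply/idP/idP.
    move/(mem_junctions_table hb') => [i hi ->]; apply/mapP.
    exists (table_junction k a b (swap_adj k i)); last exact: table_junction_bar.
    by apply/(mem_junctions_table hb); exists (swap_adj k i) => //; exact: swap_adj_range.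
  case/mapP => y /(mem_junctions_table hb) [i hi ->] ->.
  apply/(mem_junctions_table hb'); exists (swap_adj k i); first exact: swap_adj_range.
  by rewrite table_junction_bar ?swap_adjK //; [lia | exact: swap_adj_range].
- rewrite (mem_sstarts_table hb') (mem_map_pred1 _ (mem_sstarts_table hb)).
  rewrite /rho /bar_a (_ : k == k.-1 = false) /=; last by apply/negbTE; lia.
  by congr (_ == (_, _)); lia.
rewrite (mem_nends_table hb') (mem_map_pred1 _ (mem_nends_table hb)).
by rewrite /rho /bar_a /bar_beta eqxx /=; congr (_ == (_, _)); lia.
Qed.

End BarTable.

Lemma rho_related_same_k n k k' a a' b b' be be' :
  table_bounds n k a b be -> table_bounds n k' a' b' be' ->
  rho_related (table_config n k a b be) (table_config n k' a' b' be') ->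
  k' = k /\ (a' k)%:Z = k%:Z - 1 - (a k)%:Z.
Proof.
move=> hb hb' [_ hS _]; have := hS ((a' k')%:Z, k'%:Z).
rewrite (mem_sstarts_table hb') eqxx (mem_map_pred1 _ (mem_sstarts_table hb)).
rewrite /rho /= => /esym/eqP [e1 e2]; have ek : k' = k by lia.
by subst k'; split=> //; lia.
Qed.

Section RhoRelatedTables.

Variables (n k : nat) (a a' : nat -> nat) (b b' be be' : nat).
Hypotheses (hv : valid_table n k a b be) (hv' : valid_table n k a' b' be')
  (hrel : rho_related (table_config n k a b be) (table_config n k a' b' be')).

Lemma rho_related_N_end : ((a' k.-1 + be').+1)%:Z = k%:Z - 1 - ((a k.-1 + be).+1)%:Z.
Proof.
case: hv hv' hrel => hb _ _ [hb' _ _] [_ _ hN].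
have := hN ((a' k.-1 + be').+1%:Z, k%:Z).
rewrite (mem_nends_table hb') eqxx (mem_map_pred1 _ (mem_nends_table hb)).
by rewrite /rho /= => /esym/eqP [e1]; lia.
Qed.

Lemma rho_related_junction i : (1 <= i <= n)%N ->
  exists2 i0, (1 <= i0 <= n)%N & table_junction k a' b' i = rho (table_junction k a b i0).
Proof.
case: hv hv' hrel => hb _ _ [hb' _ _] [hJ _ _] hi.
have := hJ (table_junction k a' b' i).
have -> : table_junction k a' b' i \in junctions (table_config n k a' b' be').
  by apply/(mem_junctions_table hb'); exists i.
by case/esym/mapP => y /(mem_junctions_table hb) [i0 hi0 ->] ->; exists i0.
Qed.

(* At height k-1 the junctions are those of rows k-1 and k, in this order;
   rho reverses the order. *)
Lemma rho_related_adj_rows :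
  (a' k.-1)%:Z = k%:Z - 2 - (a k + b)%:Z /\ (a' k + b')%:Z = k%:Z - 2 - (a k.-1)%:Z.
Proof.
case: hv hv' => -[hk _ _ _] gapL gapR [_ gapL' gapR'].
have hk1 : (1 <= k.-1 <= n)%N by lia.
have hk0 : (1 <= k <= n)%N by lia.
have e2 : (k.-1 == k) = false by apply/negbTE; lia.
have [i0 hi0] := rho_related_junction hk1; have [i1 hi1] := rho_related_junction hk0.
rewrite /table_junction /rho e2 eqxx /= => /pair_equal_spec[x1 y1] /pair_equal_spec[x0 y0].
case: (eqVneq i0 k) => [->|h0] /= in x0 y0 *; case: (eqVneq i1 k) => [->|h1] /= in x1 y1 *.
- lia.
- have ei1 : i1 = k.-1 by lia.
  by rewrite ei1 in x1; lia.
- have ei0 : i0 = k.-1 by lia.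
  by rewrite ei0 in x0; lia.
have ei0 : i0 = k.-1 by lia.
have ei1 : i1 = k.-1 by lia.
by rewrite ei0 in x0; rewrite ei1 in x1; lia.
Qed.

Lemma rho_related_flat_row i : (1 <= i <= n)%N -> i != k.-1 -> i != k ->
  (a' i)%:Z = i%:Z - 1 - (a i)%:Z.
Proof.
case: hv => -[hk hai _ _] _ _ hi h1 h2.
have [i0 hi0] := rho_related_junction hi.
rewrite /table_junction /rho (negbTE h2).
case: (eqVneq i0 k) => [->|h0] /= [x0 y0]; first lia.
have ei0 : i0 = i by lia.
by rewrite ei0 in x0; have := hai i hi h1 h2; lia.
Qed.

Lemma rho_related_bar_table : [/\ forall i, (1 <= i <= n)%N -> a' i = bar_a k a b i,
  b' = bar_b k a & be' = bar_beta k a b be].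
Proof.
have [hb _ _] := hv; have [hb' _ _] := hv'; case: (hb) => hk hai _ _.
have [_ ak] := rho_related_same_k hb hb' hrel.
have [adj1 adj2] := rho_related_adj_rows; have nend := rho_related_N_end.
split; last by rewrite /bar_beta; lia.
- move=> i hi; rewrite /bar_a.
  case: (eqVneq i k.-1) => [->|h1]; first lia.
  case: (eqVneq i k) => [->|h2]; first lia.
  by have := rho_related_flat_row hi h1 h2; have := hai i hi h1 h2; lia.
- by rewrite /bar_b; lia.
Qed.

End RhoRelatedTables.

Theorem lemma5 (n : nat) (Om : seq (seq step)) (k : nat) (a : nat -> nat) (b beta : nat) :
  M n 1 Om -> encodes n Om k a b beta ->
  exists Omb : seq (seq step),
    (M n 1 Omb /\ rho_related Om Omb /\
     exists (ab : nat -> nat) (bb betab : nat),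
       encodes n Omb k ab bb betab /\
       (forall i : nat, (1 <= i <= n)%N -> i != k.-1 ->
          (ab i)%:Z = i%:Z - 1 - (a i)%:Z) /\
       (ab k.-1)%:Z = k%:Z - 2 - (a k)%:Z - b%:Z /\
       bb%:Z = (a k)%:Z - 1 - (a k.-1)%:Z /\
       betab%:Z = (a k)%:Z + b%:Z - (a k.-1)%:Z - beta%:Z - 1) /\
    (forall Om' : seq (seq step), M n 1 Om' -> rho_related Om Om' -> Om' = Omb).
Proof.
move=> hM hE; have [[hs _ _ _ _] _] := hM.
have [eOm hb] := encodes_table_config hs hE; subst Om.
have [gapL gapR] := table_config_gaps hb hM.1.
have hv : valid_table n k a b beta by [].
have [hb' gapL' gapR'] := valid_table_bar hv.
exists (table_config n k (bar_a k a b) (bar_b k a) (bar_beta k a b beta)); split.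
  split; first exact: table_config_M.
  split; first exact: rho_related_bar.
  exists (bar_a k a b), (bar_b k a), (bar_beta k a b beta).
  split; first exact: table_config_encodes.
  case: hb => hk hai hN hS; rewrite /bar_a /bar_b /bar_beta eqxx.
  split; last by lia.
  move=> i hi hik1; rewrite (negbTE hik1).
  case: (eqVneq i k) => [->|hik]; first lia.
  by have := hai i hi hik1 hik; lia.
move=> _ /M1_table_config [k' [a' [b' [be' [hv'' ->]]]]] hrel.
have [hb'' _ _] := hv''.
have [ek _] := rho_related_same_k hb hb'' hrel; subst k'.
have [ha -> ->] := rho_related_bar_table hv hv'' hrel.
exact: table_config_ext.
Qed.
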